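(* Fix an integer $b\ge2$ and $\gamma\in(0,1)$, and let $\phi:\mathbb{R}\to\mathbb{R}$ be an analytic $\mathbb{Z}$-periodic function. Then exactly one of the following holds: (i) $\phi$ satisfies condition (H$^*$): $S(x,\mathbf{j})-S(x,\mathbf{i})\equiv0$ (as a function of $x\in[0,1]$) for all $\mathbf{i},\mathbf{j}\in\Sigma$; (ii) $\phi$ satisfies condition (H): $S(x,\mathbf{j})-S(x,\mathbf{i})\not\equiv0$ for all $\mathbf{i}\neq\mathbf{j}\in\Sigma$.
   Context: $\Lambda=\{0,1,\dots,b-1\}$, $\Sigma=\Lambda^{\mathbb{Z}_+}$. For $\mathbf{j}=j_1j_2\cdots\in\Sigma$ and $x\in[0,1]$, $S(x,\mathbf{j})=\sum_{n=1}^{\infty}\gamma^{n-1}\phi\big(\frac{x+j_1+j_2b+\cdots+j_nb^{n-1}}{b^n}\big)$. *)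

From Stdlib Require Import Reals.
From Coquelicot Require Import Coquelicot.
Open Scope R_scope.

Definition real_analytic (f : R -> R) : Prop :=
  forall x0 : R, exists (a : nat -> R) (r : R),
    0 < r /\ forall x : R, Rabs (x - x0) < r -> is_pseries a (x - x0) (f x).

Definition Z_periodic (f : R -> R) : Prop := forall x : R, f (x + 1) = f x.

(* Elements of Sigma = Lambda^{Z_+}: the digit j_k (k >= 1) is stored as j (k-1). *)
Definition is_digit_seq (b : nat) (j : nat -> nat) : Prop :=
  forall k : nat, (j k < b)%nat.

Fixpoint digit_partial (b : nat) (j : nat -> nat) (n : nat) : R :=
  match n with
  | O => 0
  | S m => digit_partial b j m + INR (j m) * INR b ^ m
  end.

(* S(x, j) = sum_{n>=1} gamma^(n-1) phi((x + j_1 + ... + j_n b^(n-1)) / b^n);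
   reindexed with n = m+1, m >= 0. *)
Definition S_fun (b : nat) (gamma : R) (phi : R -> R) (x : R) (j : nat -> nat) : R :=
  Series (fun m : nat =>
    gamma ^ m * phi ((x + digit_partial b j (S m)) / INR b ^ (S m))).

Definition cond_Hstar (b : nat) (gamma : R) (phi : R -> R) : Prop :=
  forall i j : nat -> nat, is_digit_seq b i -> is_digit_seq b j ->
    forall x : R, 0 <= x <= 1 -> S_fun b gamma phi x j - S_fun b gamma phi x i = 0.

Definition cond_H (b : nat) (gamma : R) (phi : R -> R) : Prop :=
  forall i j : nat -> nat, is_digit_seq b i -> is_digit_seq b j ->
    (exists k : nat, i k <> j k) ->
    exists x : R, 0 <= x <= 1 /\ S_fun b gamma phi x j - S_fun b gamma phi x i <> 0.

(* If H* holds, H fails on any two distinct digit sequences (they exist as b >= 2).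
   Conversely, let S(., j) = S(., i) on [0, 1] for some i <> j.  The derivatives of an
   analytic periodic phi satisfy uniform Cauchy estimates, which pass to S(., w), so the
   identity theorem gives S(., j) = S(., i) on all of R.  With the transfer operator
   L f (y) = b^-1 sum_r f ((y + r) / b) and G = L (1 - gamma L)^-1 phi, write
   phi = psi + G (b .) - gamma G: then L psi = 0 and S(., w) = G + S_psi(., w), the
   coboundary part telescoping.  Averaging S_psi(., w) over the shifts z + b^n q isolates
   its first n terms, so psi is invariant under the translations D_N / b^N, where
   D_N = sum_(k < N) (j_k - i_k) b^k.  As b^L does not divide D_N for N >= L, these
   translations and 1 generate arbitrarily small periods; psi is Lipschitz, hence
   constant, hence 0 since L psi = 0.  So S(., w) = G for every w, which is H*. *)

From Stdlib Require Import Reals Lra Lia ZArith Classical ClassicalEpsilon.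
From Coquelicot Require Import Coquelicot.
Open Scope R_scope.

(** * Chains of derivatives with Cauchy estimates *)

Lemma derive_bounded_lipschitz (g g' : R -> R) (K : R) :
  (forall t, is_derive g t (g' t)) -> (forall t, Rabs (g' t) <= K) ->
  forall x y, Rabs (g x - g y) <= K * Rabs (x - y).
Proof.
  intros Hd HK x y. rewrite Rabs_minus_sym, (Rabs_minus_sym x).
  apply (bounded_variation g g'). auto.
Qed.

Lemma derive_nonpos_le (g g' : R -> R) (a c : R) :
  a <= c -> (forall t, is_derive g t (g' t)) ->
  (forall t, a <= t <= c -> g' t <= 0) -> g c <= g a.
Proof.
  intros Hac Hd Hneg.
  destruct (MVT_gen g a c g') as [z [Hz E]].
  - intros; apply Hd.
  - intros t _. apply continuity_pt_filterlim, (ex_derive_continuous g).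
    eexists; apply Hd.
  - rewrite Rmin_left, Rmax_right in Hz by lra.
    assert (g' z * (c - a) <= 0) by (apply Rmult_le_0_r; [apply Hneg|]; lra).
    lra.
Qed.

Lemma is_derive_comp_affine (f : R -> R) (a c x df : R) :
  is_derive f (a * x + c) df -> is_derive (fun t => f (a * t + c)) x (a * df).
Proof.
  intros Hf. apply (is_derive_comp f (fun t => a * t + c) x df a Hf).
  auto_derive; auto; ring.
Qed.

Lemma is_derive_taylor_term (K c : R) (n : nat) (t : R) :
  is_derive (fun t => K * (t - c) ^ S n / INR (fact (S n))) t
            (K * (t - c) ^ n / INR (fact n)).
Proof.
  pose proof (INR_fact_neq_0 n) as Hf.
  auto_derive; auto.
  change (match n with 0%nat => 1 | S _ => INR n + 1 end) with (INR (S n)).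
  replace (INR (fact n + n * fact n)) with (INR (S n) * INR (fact n))
    by (rewrite <- mult_INR; f_equal; lia).
  replace (t + - c) with (t - c) by ring.
  field. split; auto. apply not_0_INR. lia.
Qed.

Definition derive_chain (f : nat -> R -> R) : Prop :=
  forall k x, is_derive (f k) x (f (S k) x).

Definition cauchy_bounded (f : nat -> R -> R) (C rho : R) : Prop :=
  forall k x, Rabs (f k x) <= C * INR (fact k) / rho ^ k.

Lemma derive_chain_taylor_upper (f : nat -> R -> R) (n : nat) (c y K : R) :
  derive_chain f -> c <= y ->
  (forall k, (k < n)%nat -> f k c = 0) ->
  (forall t, c <= t <= y -> Rabs (f n t) <= K) ->
  f 0%nat y <= K * (y - c) ^ n / INR (fact n).
Proof.
  revert f y. induction n as [|n IH]; intros f y Hd Hcy H0 HK.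
  - simpl. specialize (HK y ltac:(lra)). apply Rabs_le_between in HK. lra.
  - set (g t := f 0%nat t - K * (t - c) ^ S n / INR (fact (S n))).
    assert (Hg : g y <= g c).
    { apply (derive_nonpos_le g (fun t => f 1%nat t - K * (t - c) ^ n / INR (fact n))).
      - exact Hcy.
      - intros t. apply (is_derive_minus (f 0%nat) (fun t => K * (t - c) ^ S n / INR (fact (S n)))).
        + apply Hd.
        + apply is_derive_taylor_term.
      - intros t Ht.
        enough (f 1%nat t <= K * (t - c) ^ n / INR (fact n)) by lra.
        apply (IH (fun k => f (S k))); try lra.
        + intros k x. apply Hd.
        + intros k Hk. apply H0. lia.
        + intros s Hs. apply HK. lra. }
    unfold g in Hg. rewrite (H0 0%nat), Rminus_eq_0, pow_i in Hg by lia. lra.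
Qed.

Lemma derive_chain_taylor_bound (f : nat -> R -> R) (n : nat) (c y K : R) :
  derive_chain f -> c <= y ->
  (forall k, (k < n)%nat -> f k c = 0) ->
  (forall t, c <= t <= y -> Rabs (f n t) <= K) ->
  Rabs (f 0%nat y) <= K * (y - c) ^ n / INR (fact n).
Proof.
  intros Hd Hcy H0 HK. apply Rabs_le. split.
  - enough (- f 0%nat y <= K * (y - c) ^ n / INR (fact n)) by lra.
    apply (derive_chain_taylor_upper (fun k x => - f k x)); auto.
    + intros k x. apply (is_derive_opp (f k)), Hd.
    + intros k Hk. rewrite H0; auto. ring.
    + intros t Ht. rewrite Rabs_Ropp. auto.
  - apply derive_chain_taylor_upper; auto.
Qed.

Lemma le_mul_small_eq0 (u K d : R) :
  0 < d -> (forall s, 0 < s < d -> Rabs u <= K * s) -> u = 0.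
Proof.
  intros Hd H. apply Rabs_eq_0, Rle_antisym; [|apply Rabs_pos].
  apply Rnot_lt_le. intros Hu.
  assert (HK : 0 < K).
  { specialize (H (d / 2) ltac:(lra)). apply Rnot_le_lt. intros HK. nra. }
  set (s := Rmin (d / 2) (Rabs u / (2 * K))).
  assert (0 < s) by (apply Rmin_glb_lt; [lra | apply Rdiv_lt_0_compat; lra]).
  assert (s <= d / 2) by apply Rmin_l.
  assert (s <= Rabs u / (2 * K)) by apply Rmin_r.
  specialize (H s ltac:(lra)).
  assert (K * s <= Rabs u / 2).
  { apply Rle_trans with (K * (Rabs u / (2 * K))). apply Rmult_le_compat_l; lra.
    right. field. lra. }
  lra.
Qed.

Lemma le_geom_eq0 (u C q : R) :
  0 <= q < 1 -> (forall n, Rabs u <= C * q ^ n) -> u = 0.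
Proof.
  intros Hq H. apply Rabs_eq_0, Rle_antisym; [|apply Rabs_pos].
  apply Rnot_lt_le. intros Hu.
  assert (HC : 0 < C) by (specialize (H 0%nat); simpl in H; lra).
  pose proof (is_lim_seq_geom q ltac:(rewrite Rabs_pos_eq; lra)) as L.
  apply is_lim_seq_spec in L.
  destruct (L (mkposreal (Rabs u / (2 * C)) ltac:(apply Rdiv_lt_0_compat; lra))) as [N HN].
  specialize (HN N (Nat.le_refl N)). simpl in HN.
  rewrite Rminus_0_r, Rabs_pos_eq in HN by (apply pow_le; lra).
  specialize (H N).
  assert (C * q ^ N < C * (Rabs u / (2 * C))) by (apply Rmult_lt_compat_l; lra).
  replace (C * (Rabs u / (2 * C))) with (Rabs u / 2) in * by (field; lra).
  lra.
Qed.

Section CauchyChain.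

Variables (f : nat -> R -> R) (C rho : R).
Hypotheses (hrho : 0 < rho) (hchain : derive_chain f) (hbound : cauchy_bounded f C rho).

Lemma cauchy_chain_vanish_at_end (a c : R) :
  a < c -> (forall x, a <= x <= c -> f 0%nat x = 0) -> forall k, f k c = 0.
Proof.
  intros Hac H0.
  assert (Hin : forall k x, a < x < c -> f k x = 0).
  { induction k as [|k IH]; intros x Hx; [apply H0; lra|].
    rewrite <- (is_derive_unique (f k) x (f (S k) x) (hchain k x)).
    rewrite (Derive_ext_loc (f k) (fun _ => 0)); [apply Derive_const|].
    assert (Hp : 0 < Rmin (x - a) (c - x)) by (apply Rmin_glb_lt; lra).
    exists (mkposreal _ Hp). intros t Ht.
    change (Rabs (t - x) < Rmin (x - a) (c - x)) in Ht.
    apply Rabs_def2 in Ht.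
    pose proof (Rmin_l (x - a) (c - x)). pose proof (Rmin_r (x - a) (c - x)).
    apply IH. lra. }
  intros k. apply (le_mul_small_eq0 _ (C * INR (fact (S k)) / rho ^ S k) (c - a)); [lra|].
  intros s Hs.
  pose proof (derive_bounded_lipschitz (f k) (f (S k)) _ (hchain k) (hbound (S k)) c (c - s)) as L.
  rewrite (Hin k (c - s)), Rminus_0_r in L by lra.
  replace (c - (c - s)) with s in L by ring. rewrite (Rabs_pos_eq s) in L by lra. exact L.
Qed.

(** All derivatives vanish at [c], so Taylor's bound gives [|f 0 x| <= C ((x - c) / rho)^n]. *)
Lemma cauchy_chain_vanish_extend (a c : R) :
  a < c -> (forall x, a <= x <= c -> f 0%nat x = 0) ->
  forall x, a <= x <= c + rho / 2 -> f 0%nat x = 0.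
Proof.
  intros Hac H0 x Hx.
  destruct (Rle_lt_dec x c) as [Hxc|Hxc]; [apply H0; lra|].
  pose proof (cauchy_chain_vanish_at_end a c Hac H0) as Hc.
  apply (le_geom_eq0 _ C (1 / 2)); [lra|]. intros n.
  eapply Rle_trans.
  { apply (derive_chain_taylor_bound f n c x (C * INR (fact n) / rho ^ n)); auto; lra. }
  assert (0 < INR (fact n)) by apply INR_fact_lt_0.
  assert (0 < rho ^ n) by (apply pow_lt; lra).
  replace (C * INR (fact n) / rho ^ n * (x - c) ^ n / INR (fact n))
    with (C * ((x - c) / rho) ^ n)
    by (unfold Rdiv; rewrite Rpow_mult_distr, pow_inv; field; lra).
  assert (0 <= C) by (specialize (hbound 0%nat x); simpl in hbound;
                      pose proof (Rabs_pos (f 0%nat x)); lra).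
  apply Rmult_le_compat_l; auto. apply pow_incr. split.
  - apply Rdiv_le_0_compat; lra.
  - apply (Rmult_le_reg_r rho); auto. unfold Rdiv. rewrite Rmult_assoc, Rinv_l; lra.
Qed.

Lemma cauchy_chain_vanish_right (a a' : R) :
  a < a' -> (forall x, a <= x <= a' -> f 0%nat x = 0) -> forall x, a <= x -> f 0%nat x = 0.
Proof.
  intros Hac H0.
  assert (HN : forall N : nat, forall x, a <= x <= a' + INR N * (rho / 2) -> f 0%nat x = 0).
  { induction N as [|N IH]; intros x Hx.
    - apply H0. simpl in Hx. lra.
    - apply (cauchy_chain_vanish_extend a (a' + INR N * (rho / 2))); auto.
      + pose proof (pos_INR N). nra.
      + rewrite S_INR in Hx. lra. }
  intros x Hx.
  destruct (INR_unbounded ((x - a') / (rho / 2))) as [N HN'].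
  apply (HN N). split; auto.
  apply (Rmult_lt_compat_r (rho / 2)) in HN'; [|lra].
  unfold Rdiv at 1 in HN'. rewrite Rmult_assoc, Rinv_l in HN' by lra. lra.
Qed.

End CauchyChain.

Lemma cauchy_chain_reflect (f : nat -> R -> R) (C rho : R) :
  derive_chain f -> cauchy_bounded f C rho ->
  derive_chain (fun k t => (-1) ^ k * f k (- t)) /\
  cauchy_bounded (fun k t => (-1) ^ k * f k (- t)) C rho.
Proof.
  intros Hd Hb. split.
  - intros k t. simpl pow.
    replace (-1 * (-1) ^ k * f (S k) (- t)) with ((-1) ^ k * (-1 * f (S k) (-1 * t + 0)))
      by (replace (-1 * t + 0) with (- t) by ring; ring).
    apply (is_derive_scal (fun t => f k (- t))).
    apply (is_derive_ext (fun t => f k (-1 * t + 0))); [intros s; f_equal; ring|].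
    apply is_derive_comp_affine, Hd.
  - intros k t. rewrite Rabs_mult, pow_1_abs, Rmult_1_l. apply Hb.
Qed.

Lemma cauchy_chain_vanish (f : nat -> R -> R) (C rho a a' : R) :
  0 < rho -> a < a' -> derive_chain f -> cauchy_bounded f C rho ->
  (forall x, a <= x <= a' -> f 0%nat x = 0) -> forall x, f 0%nat x = 0.
Proof.
  intros Hr Hac Hd Hb H0 x.
  destruct (Rle_lt_dec a x) as [Hx|Hx].
  - exact (cauchy_chain_vanish_right f C rho Hr Hd Hb a a' Hac H0 x Hx).
  - destruct (cauchy_chain_reflect f C rho Hd Hb) as [Hd' Hb'].
    assert (Z : (-1) ^ 0 * f 0%nat (- - x) = 0).
    { apply (cauchy_chain_vanish_right _ C rho Hr Hd' Hb' (- a') (- a)); [lra| |lra].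
      intros t Ht. simpl. rewrite H0 by lra. ring. }
    rewrite Ropp_involutive in Z. simpl in Z. lra.
Qed.

Lemma cauchy_chain_minus (f h : nat -> R -> R) (C rho : R) :
  derive_chain f -> derive_chain h -> cauchy_bounded f C rho -> cauchy_bounded h C rho ->
  derive_chain (fun k x => f k x - h k x) /\ cauchy_bounded (fun k x => f k x - h k x) (2 * C) rho.
Proof.
  intros Df Dh Bf Bh. split.
  - intros k x. apply (is_derive_minus (f k) (h k)); auto.
  - intros k x. unfold Rminus at 1. eapply Rle_trans; [apply Rabs_triang|].
    rewrite Rabs_Ropp. specialize (Bf k x). specialize (Bh k x).
    unfold Rdiv in *. lra.
Qed.

(** * Series of functions *)

(** [ex_series_le] at [R], where [apply] cannot infer its normed-module instances. *)
Lemma ex_series_le_R (a b : nat -> R) :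
  (forall n, Rabs (a n) <= b n) -> ex_series b -> ex_series a.
Proof. exact (ex_series_le a b). Qed.

Lemma Series_Rabs_le (a b : nat -> R) :
  (forall n, Rabs (a n) <= b n) -> ex_series b -> Rabs (Series a) <= Series b.
Proof.
  intros H Hb. eapply Rle_trans.
  - apply Series_Rabs. apply (ex_series_le_R _ b); auto.
    intros n. rewrite Rabs_Rabsolu. auto.
  - apply Series_le; auto. intros n; split; auto. apply Rabs_pos.
Qed.

Lemma ex_series_geom_scal (q A : R) : Rabs q < 1 -> ex_series (fun m => q ^ m * A).
Proof.
  intros Hq. apply (ex_series_ext (fun m => A * q ^ m)); [intros; apply Rmult_comm|].
  exact (ex_series_scal_l A _ (ex_series_geom q Hq)).
Qed.

Lemma Series_geom_scal (q A : R) : Rabs q < 1 -> Series (fun m => q ^ m * A) = A / (1 - q).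
Proof.
  intros Hq. rewrite Series_scal_r.
  change (Series (pow q)) with (Series (fun n => q ^ n)).
  rewrite (is_series_unique _ _ (is_series_geom q Hq)).
  assert (q < 1) by (apply Rabs_def2 in Hq; lra).
  field. lra.
Qed.

Lemma ex_series_geom_bound (a : nat -> R) (q A : R) :
  Rabs q < 1 -> (forall m, Rabs (a m) <= Rabs q ^ m * A) -> ex_series a.
Proof.
  intros Hq Ha. apply (ex_series_le_R a (fun m => Rabs q ^ m * A)); auto.
  apply ex_series_geom_scal. rewrite Rabs_Rabsolu. auto.
Qed.

Lemma derive2_remainder_bound (g g' g'' : R -> R) (K x h : R) :
  (forall y, is_derive g y (g' y)) -> (forall y, is_derive g' y (g'' y)) ->
  (forall y, Rabs (g'' y) <= K) ->
  Rabs (g (x + h) - g x - h * g' x) <= K * (h * h).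
Proof.
  intros H1 H2 H3.
  replace (g (x + h) - g x - h * g' x)
    with ((g (x + h) - (x + h) * g' x) - (g x - x * g' x)) by ring.
  replace (K * (h * h)) with (K * Rabs h * Rabs (x + h - x))
    by (replace (x + h - x) with h by ring;
        rewrite Rmult_assoc, <- Rabs_mult, Rabs_pos_eq by apply Rle_0_sqr; ring).
  apply (bounded_variation (fun t => g t - t * g' x) (fun t => g' t - g' x)).
  intros t Ht. split.
  - apply (is_derive_minus g (fun t => t * g' x)); [apply H1|].
    auto_derive; auto. ring.
  - rewrite (Rabs_minus_sym (g' t)).
    eapply Rle_trans; [apply (derive_bounded_lipschitz g' g'' K H2 H3)|].
    apply Rmult_le_compat_l; [specialize (H3 x); pose proof (Rabs_pos (g'' x)); lra|].
    replace (x + h - x) with h in Ht by ring. rewrite Rabs_minus_sym. exact Ht.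
Qed.

Lemma is_derive_Series (f f' f'' : nat -> R -> R) (A : nat -> R) (x : R) :
  (forall m y, is_derive (f m) y (f' m y)) -> (forall m y, is_derive (f' m) y (f'' m y)) ->
  (forall m y, Rabs (f m y) <= A m) -> (forall m y, Rabs (f' m y) <= A m) ->
  (forall m y, Rabs (f'' m y) <= A m) -> ex_series A ->
  is_derive (fun y => Series (fun m => f m y)) x (Series (fun m => f' m x)).
Proof.
  intros D1 D2 B0 B1 B2 HA.
  assert (E0 : forall y, ex_series (fun m => f m y)) by (intros; eapply ex_series_le_R; eauto).
  assert (E1 : forall y, ex_series (fun m => f' m y)) by (intros; eapply ex_series_le_R; eauto).
  assert (HS : 0 <= Series A).
  { apply Rle_trans with (Rabs (Series (fun m => f m x))); [apply Rabs_pos|].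
    apply Series_Rabs_le; auto. }
  apply is_derive_Reals. intros eps Heps.
  assert (Hd : 0 < eps / (Series A + 1)) by (apply Rdiv_lt_0_compat; lra).
  exists (mkposreal _ Hd). intros h Hh0 Hh. simpl in Hh.
  assert (E : (Series (fun m => f m (x + h)) - Series (fun m => f m x)) / h
                - Series (fun m => f' m x)
              = Series (fun m => (f m (x + h) - f m x - h * f' m x) / h)).
  { rewrite <- Series_minus by auto.
    unfold Rdiv. rewrite Rmult_comm, <- Series_scal_l, <- Series_minus.
    - apply Series_ext. intros n. field. auto.
    - exact (ex_series_scal_l _ _ (ex_series_minus _ _ (E0 (x + h)) (E0 x))).
    - auto. }
  rewrite E.
  apply Rle_lt_trans with (Series (fun m => A m * Rabs h)).
  { apply Series_Rabs_le.
    - intros m. unfold Rdiv. rewrite Rabs_mult, Rabs_inv.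
      apply (Rmult_le_reg_r (Rabs h)); [apply Rabs_pos_lt; auto|].
      rewrite Rmult_assoc, Rinv_l, Rmult_1_r by (apply Rabs_no_R0; auto).
      eapply Rle_trans; [apply (derive2_remainder_bound (f m) (f' m) (f'' m)); auto|].
      rewrite Rmult_assoc, <- Rabs_mult, (Rabs_pos_eq (h * h)) by apply Rle_0_sqr. lra.
    - apply (ex_series_ext (fun m => Rabs h * A m)); [intros; apply Rmult_comm|].
      exact (ex_series_scal_l _ _ HA). }
  rewrite Series_scal_r.
  apply Rle_lt_trans with ((Series A + 1) * Rabs h).
  - apply Rmult_le_compat_r; [apply Rabs_pos | lra].
  - apply (Rmult_lt_compat_l (Series A + 1)) in Hh; [|lra].
    replace ((Series A + 1) * (eps / (Series A + 1))) with eps in Hh by (field; lra). lra.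
Qed.

Lemma pow_le_1 (x : R) (n : nat) : 0 <= x <= 1 -> x ^ n <= 1.
Proof. intros Hx. rewrite <- (pow1 n). apply pow_incr. lra. Qed.

Definition affine_series (q : R) (beta c : nat -> R) (F : nat -> R -> R) (k : nat) (x : R) :=
  Series (fun m => q ^ m * beta m ^ k * F k (beta m * x + c m)).

Lemma cauchy_chain_affine_series (F : nat -> R -> R) (C rho q : R) (beta c : nat -> R) :
  0 <= q < 1 -> (forall m, 0 <= beta m <= 1) ->
  derive_chain F -> cauchy_bounded F C rho ->
  derive_chain (affine_series q beta c F) /\
  cauchy_bounded (affine_series q beta c F) (C / (1 - q)) rho.
Proof.
  intros Hq Hbeta Hd Hb.
  set (T k m y := q ^ m * beta m ^ k * F k (beta m * y + c m)).
  assert (HdT : forall k m y, is_derive (T k m) y (T (S k) m y)).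
  { intros k m y. unfold T. simpl pow.
    replace (q ^ m * (beta m * beta m ^ k) * F (S k) (beta m * y + c m))
      with (q ^ m * beta m ^ k * (beta m * F (S k) (beta m * y + c m))) by ring.
    apply (is_derive_scal (fun y => F k (beta m * y + c m))), is_derive_comp_affine, Hd. }
  set (K k := C * INR (fact k) / rho ^ k).
  assert (HK : forall k, 0 <= K k).
  { intros k. specialize (Hb k 0). fold (K k) in Hb. pose proof (Rabs_pos (F k 0)). lra. }
  assert (HbT : forall k m y, Rabs (T k m y) <= q ^ m * K k).
  { intros k m y. unfold T. rewrite !Rabs_mult, <- !RPow_abs, (Rabs_pos_eq q) by lra.
    rewrite Rmult_assoc. apply Rmult_le_compat_l; [apply pow_le; lra|].
    rewrite <- (Rmult_1_l (K k)).
    specialize (Hbeta m). rewrite Rabs_pos_eq by lra.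
    apply Rmult_le_compat; [apply pow_le; lra | apply Rabs_pos | apply pow_le_1; lra | apply Hb]. }
  assert (Hq' : Rabs q < 1) by (rewrite Rabs_pos_eq; lra).
  split.
  - intros k x. unfold affine_series.
    apply (is_derive_Series (T k) (T (S k)) (T (S (S k)))
             (fun m => q ^ m * (K k + K (S k) + K (S (S k))))).
    + apply HdT.
    + apply HdT.
    + intros m y. eapply Rle_trans; [apply HbT|]. apply Rmult_le_compat_l; [apply pow_le; lra|].
      pose proof (HK (S k)). pose proof (HK (S (S k))). lra.
    + intros m y. eapply Rle_trans; [apply HbT|]. apply Rmult_le_compat_l; [apply pow_le; lra|].
      pose proof (HK k). pose proof (HK (S (S k))). lra.
    + intros m y. eapply Rle_trans; [apply HbT|]. apply Rmult_le_compat_l; [apply pow_le; lra|].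
      pose proof (HK k). pose proof (HK (S k)). lra.
    + apply ex_series_geom_scal; auto.
  - intros k x. unfold affine_series.
    eapply Rle_trans; [apply (Series_Rabs_le _ (fun m => q ^ m * K k))|].
    + intros m. apply (HbT k m x).
    + apply ex_series_geom_scal; auto.
    + rewrite Series_geom_scal by auto. unfold K, Rdiv. right. ring.
Qed.

(** * Cauchy estimates for analytic periodic functions *)

Lemma sum_f_R0_term_le (f : nat -> R) (i n : nat) :
  (forall j, 0 <= f j) -> (i <= n)%nat -> f i <= sum_f_R0 f n.
Proof.
  intros Hf Hi. induction n as [|n IH].
  - replace i with 0%nat by lia. simpl. lra.
  - simpl. destruct (Nat.eq_dec i (S n)) as [->|E].
    + assert (0 <= sum_f_R0 f n) by (apply cond_pos_sum; auto). lra.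
    + specialize (IH ltac:(lia)). specialize (Hf (S n)). lra.
Qed.

Lemma fact_add_le (n k : nat) :
  INR (fact (n + k)) <= 2 ^ (n + k) * INR (fact n) * INR (fact k).
Proof.
  assert (HC : Binomial.C (n + k) n <= 2 ^ (n + k)).
  { replace 2 with (1 + 1) by ring. rewrite binomial.
    eapply Rle_trans; [|apply (sum_f_R0_term_le _ n (n + k)); [|lia]].
    - simpl. rewrite !pow1. lra.
    - intros i. rewrite !pow1, !Rmult_1_r. unfold Binomial.C.
      apply Rdiv_le_0_compat; [apply pos_INR|].
      apply Rmult_lt_0_compat; apply INR_fact_lt_0. }
  unfold Binomial.C in HC. replace (n + k - n)%nat with k in HC by lia.
  assert (0 < INR (fact n) * INR (fact k)) by (apply Rmult_lt_0_compat; apply INR_fact_lt_0).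
  apply (Rmult_le_compat_r (INR (fact n) * INR (fact k))) in HC; [|lra].
  unfold Rdiv in HC. rewrite Rmult_assoc, Rinv_l in HC by lra. lra.
Qed.

Lemma pseries_coef_bound (a : nat -> R) (s : R) :
  0 < s -> ex_series (fun n => a n * s ^ n) ->
  exists t, 0 < t <= s /\ forall m, (1 <= m)%nat -> Rabs (a m) * t ^ m <= 1.
Proof.
  intros Hs Hex.
  destruct (filterlim_bounded (fun n => a n * s ^ n)) as [M0 HM0].
  { exists 0. apply (ex_series_lim_0 _ Hex). }
  set (M := Rmax 1 M0).
  assert (HM : forall n, Rabs (a n) * s ^ n <= M).
  { intros n. rewrite <- (Rabs_pos_eq (s ^ n)) by (apply pow_le; lra).
    rewrite <- Rabs_mult. eapply Rle_trans; [apply (HM0 n)|apply Rmax_r]. }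
  assert (HM1 : 1 <= M) by apply Rmax_l.
  exists (s / M). split.
  - split; [apply Rdiv_lt_0_compat; lra|].
    apply (Rmult_le_reg_r M); [lra|]. unfold Rdiv. rewrite Rmult_assoc, Rinv_l by lra. nra.
  - intros m Hm. unfold Rdiv. rewrite Rpow_mult_distr, pow_inv.
    assert (M <= M ^ m).
    { destruct m as [|m]; [lia|]. simpl. rewrite <- (Rmult_1_r M) at 1.
      apply Rmult_le_compat_l; [lra|]. apply pow_R1_Rle. auto. }
    assert (0 < M ^ m) by (apply pow_lt; lra).
    apply (Rmult_le_reg_r (M ^ m)); auto.
    replace (Rabs (a m) * (s ^ m * / M ^ m) * M ^ m) with (Rabs (a m) * s ^ m) by (field; lra).
    specialize (HM m). lra.
Qed.

Lemma PSeries_derive_n_bound (a : nat -> R) (t : R) :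
  0 < t -> (forall m, (1 <= m)%nat -> Rabs (a m) * t ^ m <= 1) ->
  forall k u, (1 <= k)%nat -> Rabs u <= t / 4 ->
  Rabs (PSeries (PS_derive_n k a) u) <= 2 * INR (fact k) * (2 / t) ^ k.
Proof.
  intros Ht Ha k u Hk Hu.
  set (K := INR (fact k) * (2 / t) ^ k).
  unfold PSeries.
  eapply Rle_trans; [apply (Series_Rabs_le _ (fun n => (1 / 2) ^ n * K))|].
  - intros n. unfold PS_derive_n.
    rewrite !Rabs_mult, <- RPow_abs.
    assert (Hf : 0 < INR (fact n)) by apply INR_fact_lt_0.
    rewrite (Rabs_pos_eq (INR (fact (n + k)) / INR (fact n)))
      by (apply Rdiv_le_0_compat; [apply pos_INR | auto]).
    assert (Htp : 0 < t ^ (n + k)) by (apply pow_lt; auto).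
    assert (Hab : Rabs (a (n + k)%nat) <= / t ^ (n + k)).
    { apply (Rmult_le_reg_r (t ^ (n + k))); auto. rewrite Rinv_l by lra. apply Ha. lia. }
    assert (Hun : Rabs u ^ n <= (t / 4) ^ n) by (apply pow_incr; split; [apply Rabs_pos | auto]).
    apply Rle_trans with (INR (fact (n + k)) / INR (fact n) * / t ^ (n + k) * (t / 4) ^ n).
    { apply Rmult_le_compat; try apply pow_le; try apply Rabs_pos; auto.
      - apply Rmult_le_pos; [apply Rdiv_le_0_compat; [apply pos_INR | auto] | apply Rabs_pos].
      - apply Rmult_le_compat_l; auto. apply Rdiv_le_0_compat; [apply pos_INR | auto]. }
    apply Rle_trans with
      (2 ^ (n + k) * INR (fact n) * INR (fact k) / INR (fact n) * / t ^ (n + k) * (t / 4) ^ n).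
    { apply Rmult_le_compat_r; [apply pow_le; lra|].
      apply Rmult_le_compat_r; [apply Rlt_le, Rinv_0_lt_compat; auto|].
      unfold Rdiv. apply Rmult_le_compat_r; [apply Rlt_le, Rinv_0_lt_compat; auto|].
      apply fact_add_le. }
    right. unfold K.
    assert (0 < t ^ n) by (apply pow_lt; auto).
    assert (0 < t ^ k) by (apply pow_lt; auto).
    assert (0 < 2 ^ n) by (apply pow_lt; lra).
    unfold Rdiv. rewrite !Rpow_mult_distr, !pow_inv, !pow_add, pow1.
    replace (4 ^ n) with (2 ^ n * 2 ^ n) by (rewrite <- Rpow_mult_distr; f_equal; ring).
    field. repeat split; lra.
  - apply ex_series_geom_scal. rewrite Rabs_pos_eq; lra.
  - rewrite Series_geom_scal by (rewrite Rabs_pos_eq; lra). unfold K. right. field.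
Qed.

Lemma CV_radius_ge_of_ex_series (a : nat -> R) (s : R) :
  ex_series (fun n => a n * s ^ n) -> Rbar_le (Rabs s) (CV_radius a).
Proof.
  intros H. apply (proj1 (CV_radius_bounded a)).
  destruct (filterlim_bounded (fun n => a n * s ^ n)) as [M HM].
  { exists 0. apply (ex_series_lim_0 _ H). }
  exists M. intros n. rewrite Rabs_mult, <- RPow_abs, Rabs_Rabsolu, RPow_abs, <- Rabs_mult.
  apply HM.
Qed.

Section LocalPowerSeries.

Variables (phi : R -> R) (x0 r : R) (a : nat -> R).
Hypotheses (hr : 0 < r)
  (hps : forall x, Rabs (x - x0) < r -> is_pseries a (x - x0) (phi x)).

Lemma local_pseries_ex_series (s : R) : Rabs s < r -> ex_series (fun n => a n * s ^ n).
Proof.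
  intros Hs. exists (phi (x0 + s)).
  apply (is_series_ext (fun n => scal (pow_n s n) (a n))).
  - intros n. rewrite pow_n_pow. apply Rmult_comm.
  - pose proof (hps (x0 + s)) as H. replace (x0 + s - x0) with s in H by ring. apply H, Hs.
Qed.

Lemma local_pseries_radius (u : R) : Rabs u < r -> Rbar_lt (Rabs u) (CV_radius a).
Proof.
  intros Hu. set (s := (Rabs u + r) / 2).
  assert (Hs : Rabs s = s) by (apply Rabs_pos_eq; unfold s; pose proof (Rabs_pos u); lra).
  pose proof (CV_radius_ge_of_ex_series a s
                (local_pseries_ex_series s ltac:(unfold s in *; lra))) as H.
  rewrite Hs in H. destruct (CV_radius a) as [c| |]; simpl in *; unfold s in H; lra.
Qed.

Lemma local_pseries_Derive_n (k : nat) (x : R) :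
  Rabs (x - x0) < r -> Derive_n phi k x = PSeries (PS_derive_n k a) (x - x0).
Proof.
  intros Hx.
  rewrite (Derive_n_ext_loc phi (fun t => PSeries a (t + - x0))).
  - rewrite Derive_n_comp_trans. apply Derive_n_PSeries, local_pseries_radius. auto.
  - assert (Hp : 0 < r - Rabs (x - x0)) by lra.
    exists (mkposreal _ Hp). intros y Hy. change (Rabs (y - x) < r - Rabs (x - x0)) in Hy.
    symmetry. apply is_pseries_unique. apply hps.
    pose proof (Rabs_triang (y - x) (x - x0)).
    replace (y - x + (x - x0)) with (y - x0) in * by ring. lra.
Qed.

Lemma local_pseries_ex_derive (k : nat) : ex_derive (Derive_n phi k) x0.
Proof.
  apply (ex_derive_ext_loc (fun y => Derive_n (PSeries a) k (y + - x0))).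
  - exists (mkposreal _ hr). intros y Hy. change (Rabs (y - x0) < r) in Hy.
    rewrite local_pseries_Derive_n, Derive_n_PSeries by (auto; apply local_pseries_radius; auto).
    reflexivity.
  - apply (ex_derive_comp (Derive_n (PSeries a) k) (fun y => y + - x0)).
    + replace (x0 + - x0) with 0 by ring.
      apply (ex_derive_n_PSeries (S k)), local_pseries_radius. rewrite Rabs_R0. lra.
    + auto_derive. auto.
Qed.

End LocalPowerSeries.

Lemma real_analytic_local_cauchy (phi : R -> R) (x0 : R) :
  real_analytic phi -> exists t : posreal,
    (forall k, ex_derive (Derive_n phi k) x0) /\
    (forall k x, (1 <= k)%nat -> Rabs (x - x0) < t / 4 ->
       Rabs (Derive_n phi k x) <= 2 * INR (fact k) * (2 / t) ^ k).
Proof.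
  intros Han. destruct (Han x0) as [a [r [Hr Hps]]].
  destruct (pseries_coef_bound a (r / 2) ltac:(lra)
              (local_pseries_ex_series phi x0 r a Hps (r / 2) ltac:(rewrite Rabs_pos_eq; lra)))
    as [t [Ht Hat]].
  exists (mkposreal t (proj1 Ht)). simpl. split.
  - apply (local_pseries_ex_derive phi x0 r a Hr Hps).
  - intros k x Hk Hx. rewrite (local_pseries_Derive_n phi x0 r a Hr Hps) by lra.
    apply PSeries_derive_n_bound; auto; lra.
Qed.

Lemma periodic_add_IZR (f : R -> R) (p : R) :
  (forall x, f (x + p) = f x) -> forall (z : Z) x, f (x + IZR z * p) = f x.
Proof.
  intros H.
  assert (Hn : forall (n : nat) x, f (x + INR n * p) = f x).
  { induction n as [|n IH]; intros x; [simpl; f_equal; ring|].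
    rewrite S_INR, <- (IH x), <- (H (x + INR n * p)). f_equal. ring. }
  intros z x. destruct (Z_le_gt_dec 0 z) as [Hz|Hz].
  - rewrite <- (Z2Nat.id z), <- INR_IZR_INZ by auto. apply Hn.
  - replace z with (- Z.of_nat (Z.to_nat (- z)))%Z by lia.
    rewrite opp_IZR, <- INR_IZR_INZ, <- (Hn (Z.to_nat (- z)) (x + - INR (Z.to_nat (- z)) * p)).
    f_equal. ring.
Qed.

Lemma Z_periodic_add_IZR (f : R -> R) : Z_periodic f -> forall (z : Z) x, f (x + IZR z) = f x.
Proof.
  intros H z x. rewrite <- (Rmult_1_r (IZR z)). apply periodic_add_IZR, H.
Qed.

Lemma Z_periodic_add_INR (f : R -> R) : Z_periodic f -> forall (n : nat) x, f (x + INR n) = f x.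
Proof. intros H n x. rewrite INR_IZR_INZ. apply Z_periodic_add_IZR, H. Qed.

Lemma Z_periodic_reduce (f : R -> R) : Z_periodic f -> forall x, exists y, 0 <= y <= 1 /\ f x = f y.
Proof.
  intros H x. exists (x + IZR (- Int_part x)).
  destruct (base_Int_part x). rewrite opp_IZR. split; [lra|].
  symmetry. rewrite <- opp_IZR. apply Z_periodic_add_IZR, H.
Qed.

Lemma real_analytic_periodic_derive_bound (phi : R -> R) :
  real_analytic phi -> Z_periodic phi ->
  exists rho, 0 < rho /\ derive_chain (Derive_n phi) /\
    forall k x, (1 <= k)%nat -> Rabs (Derive_n phi k x) <= 2 * INR (fact k) / rho ^ k.
Proof.
  intros Han Hper.
  destruct (choice (fun x0 (t : posreal) => (forall k, ex_derive (Derive_n phi k) x0) /\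
     (forall k x, (1 <= k)%nat -> Rabs (x - x0) < t / 4 ->
        Rabs (Derive_n phi k x) <= 2 * INR (fact k) * (2 / t) ^ k)))
    as [tf Htf].
  { intros x0. apply real_analytic_local_cauchy, Han. }
  assert (Hdper : forall k, Z_periodic (Derive_n phi k)).
  { intros k x. rewrite <- Derive_n_comp_trans. apply Derive_n_ext. intros; apply Hper. }
  (* a Lebesgue number of the cover of [0, 1] by the balls of radius [tf x0 / 4] *)
  destruct (compactness_value_1d 0 1
              (fun x0 => mkposreal (tf x0 / 4) ltac:(pose proof (cond_pos (tf x0)); lra)))
    as [d Hd].
  exists (2 * d). split; [pose proof (cond_pos d); lra|]. split.
  - intros k x. apply Derive_correct, (proj1 (Htf x)).
  - intros k x Hk. destruct (Z_periodic_reduce _ (Hdper k) x) as [y [Hy ->]].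
    specialize (Hd y Hy). apply NNPP. intros Hn. apply Hd. intros [t0 [_ [Hyt Hdt]]].
    apply Hn. simpl in Hyt, Hdt.
    eapply Rle_trans; [apply (proj2 (Htf t0)); auto|].
    unfold Rdiv at 2. apply Rmult_le_compat_l; [apply Rmult_le_pos; [lra|apply pos_INR]|].
    rewrite <- pow_inv. apply pow_incr. pose proof (cond_pos (tf t0)). split.
    + apply Rlt_le, Rdiv_lt_0_compat; lra.
    + replace (2 / tf t0) with (/ (tf t0 / 2)) by (field; lra).
      apply Rinv_le_contravar; pose proof (cond_pos d); lra.
Qed.

Lemma real_analytic_periodic_cauchy (phi : R -> R) :
  real_analytic phi -> Z_periodic phi ->
  exists C rho, 0 < rho /\ derive_chain (Derive_n phi) /\ cauchy_bounded (Derive_n phi) C rho.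
Proof.
  intros Han Hper.
  destruct (real_analytic_periodic_derive_bound phi Han Hper) as [rho [Hrho [Hchain Hb1]]].
  set (M := Rabs (phi 0) + 2 / rho).
  assert (Hb0 : forall x, Rabs (phi x) <= M).
  { intros x. destruct (Z_periodic_reduce phi Hper x) as [y [Hy ->]].
    assert (Rabs (phi y - phi 0) <= 2 / rho * Rabs (y - 0)).
    { apply (derive_bounded_lipschitz phi (Derive_n phi 1) _ (Hchain 0%nat)).
      intros t. eapply Rle_trans; [apply Hb1; lia|]. simpl. right. field. lra. }
    rewrite Rminus_0_r, (Rabs_pos_eq y) in H by lra.
    assert (2 / rho * y <= 2 / rho) by (pose proof (Rdiv_lt_0_compat 2 rho); nra).
    pose proof (Rabs_triang_inv (phi y) (phi 0)). unfold M. lra. }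
  assert (HM : 0 <= M)
    by (pose proof (Rabs_pos (phi 0)); pose proof (Rdiv_lt_0_compat 2 rho); unfold M; lra).
  exists (M + 2), rho. split; [auto|]. split; [auto|].
  intros [|k] x.
  - simpl. replace ((M + 2) * 1 / 1) with (M + 2) by field. specialize (Hb0 x). lra.
  - eapply Rle_trans; [apply Hb1; lia|].
    unfold Rdiv. rewrite !Rmult_assoc. apply Rmult_le_compat_r; [|lra].
    apply Rmult_le_pos; [apply pos_INR|]. apply Rlt_le, Rinv_0_lt_compat, pow_lt; lra.
Qed.

(** * Extending identities of [S_fun] from [0, 1] to [R] *)

Lemma S_fun_affine_series (b : nat) (g : R) (phi : R -> R) (j : nat -> nat) (x : R) :
  S_fun b g phi x j =
  affine_series g (fun m => / INR b ^ S m) (fun m => digit_partial b j (S m) / INR b ^ S m)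
    (Derive_n phi) 0 x.
Proof.
  apply Series_ext. intros m. cbn [Derive_n pow]. rewrite Rmult_1_r.
  do 2 f_equal. unfold Rdiv. ring.
Qed.

Lemma S_fun_eq_of_eq_on_unit (b : nat) (g : R) (phi : R -> R) (C rho : R) (i j : nat -> nat) :
  (0 < b)%nat -> 0 <= g < 1 -> 0 < rho ->
  derive_chain (Derive_n phi) -> cauchy_bounded (Derive_n phi) C rho ->
  (forall x, 0 <= x <= 1 -> S_fun b g phi x j - S_fun b g phi x i = 0) ->
  forall x, S_fun b g phi x j = S_fun b g phi x i.
Proof.
  intros Hb Hg Hr Hd Hbd H01 x.
  assert (Hbeta : forall m, 0 <= / INR b ^ S m <= 1).
  { intros m. assert (1 <= INR b ^ S m) by (apply pow_R1_Rle; apply (le_INR 1); lia).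
    split; [apply Rlt_le, Rinv_0_lt_compat; lra|].
    rewrite <- Rinv_1. apply Rinv_le_contravar; lra. }
  destruct (cauchy_chain_affine_series _ C rho g _ (fun m => digit_partial b j (S m) / INR b ^ S m)
              Hg Hbeta Hd Hbd) as [Dj Bj].
  destruct (cauchy_chain_affine_series _ C rho g _ (fun m => digit_partial b i (S m) / INR b ^ S m)
              Hg Hbeta Hd Hbd) as [Di Bi].
  destruct (cauchy_chain_minus _ _ _ rho Dj Di Bj Bi) as [D B].
  enough (S_fun b g phi x j - S_fun b g phi x i = 0) by lra.
  rewrite !S_fun_affine_series.
  apply (cauchy_chain_vanish _ _ rho 0 1 Hr ltac:(lra) D B).
  intros y Hy. rewrite <- !S_fun_affine_series. auto.
Qed.

(** * The transfer operator and the reduced function [psi] *)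

(** [rsum n f] is [f 0 + ... + f (n - 1)]; unlike [sum_f_R0] it has exactly [n] terms. *)
Fixpoint rsum (n : nat) (f : nat -> R) : R :=
  match n with O => 0 | S n => rsum n f + f n end.

Lemma rsum_ext (n : nat) (f h : nat -> R) :
  (forall r, (r < n)%nat -> f r = h r) -> rsum n f = rsum n h.
Proof. induction n; intros H; simpl; auto. rewrite IHn, H; auto. Qed.

Lemma rsum_plus (n : nat) (f h : nat -> R) : rsum n (fun r => f r + h r) = rsum n f + rsum n h.
Proof. induction n; simpl; [ring|]. rewrite IHn. ring. Qed.

Lemma rsum_minus (n : nat) (f h : nat -> R) : rsum n (fun r => f r - h r) = rsum n f - rsum n h.
Proof. induction n; simpl; [ring|]. rewrite IHn. ring. Qed.

Lemma rsum_scal (n : nat) (c : R) (f : nat -> R) : rsum n (fun r => c * f r) = c * rsum n f.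
Proof. induction n; simpl; [ring|]. rewrite IHn. ring. Qed.

Lemma rsum_const (n : nat) (c : R) : rsum n (fun _ => c) = INR n * c.
Proof. induction n; [simpl; ring|]. cbn [rsum]. rewrite IHn, S_INR. ring. Qed.

Lemma rsum_eq0 (n : nat) (f : nat -> R) : (forall r, (r < n)%nat -> f r = 0) -> rsum n f = 0.
Proof. intros H. rewrite (rsum_ext n f (fun _ => 0)), rsum_const by auto. ring. Qed.

Lemma rsum_Rabs_le (n : nat) (f : nat -> R) (A : R) :
  (forall r, (r < n)%nat -> Rabs (f r) <= A) -> Rabs (rsum n f) <= INR n * A.
Proof.
  intros H. rewrite <- rsum_const.
  induction n; simpl; [rewrite Rabs_R0; lra|].
  eapply Rle_trans; [apply Rabs_triang|]. apply Rplus_le_compat; auto.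
Qed.

Lemma rsum_shift (n : nat) (f : nat -> R) : rsum n (fun r => f (S r)) = rsum n f - f 0%nat + f n.
Proof. induction n; simpl; [ring|]. rewrite IHn. ring. Qed.

Lemma rsum_add (n m : nat) (f : nat -> R) :
  rsum (n + m) f = rsum n f + rsum m (fun r => f (n + r)%nat).
Proof.
  induction m; simpl; [rewrite Nat.add_0_r; ring|].
  rewrite Nat.add_succ_r. simpl. rewrite IHm. ring.
Qed.

Lemma rsum_mul (a c : nat) (f : nat -> R) :
  rsum (c * a) f = rsum c (fun s => rsum a (fun q => f (a * s + q)%nat)).
Proof.
  induction c; simpl; auto.
  rewrite Nat.add_comm, rsum_add, IHc. f_equal. apply rsum_ext. intros. f_equal. lia.
Qed.

Lemma rsum_swap (n m : nat) (F : nat -> nat -> R) :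
  rsum n (fun r => rsum m (F r)) = rsum m (fun q => rsum n (fun r => F r q)).
Proof. induction n; simpl; [rewrite rsum_eq0; auto|]. rewrite IHn, <- rsum_plus. auto. Qed.

Lemma rsum_sum_f_R0 (a : nat -> R) (N : nat) : sum_f_R0 a N = rsum (S N) a.
Proof. induction N; simpl; [ring|]. rewrite IHN. simpl. ring. Qed.

Lemma is_series_rsum (n : nat) (F : nat -> nat -> R) (l : nat -> R) :
  (forall r, is_series (F r) (l r)) -> is_series (fun m => rsum n (fun r => F r m)) (rsum n l).
Proof.
  intros H. induction n; simpl.
  - apply is_series_Reals. intros e He. exists 0%nat. intros N _.
    unfold R_dist. rewrite sum_cte, Rmult_0_l, Rminus_0_r, Rabs_R0. auto.
  - exact (is_series_plus _ _ _ _ IHn (H n)).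
Qed.

Lemma Series_rsum (n : nat) (F : nat -> nat -> R) :
  (forall r, ex_series (F r)) ->
  Series (fun m => rsum n (fun r => F r m)) = rsum n (fun r => Series (F r)).
Proof.
  intros H. apply is_series_unique, is_series_rsum. intros r. apply Series_correct, H.
Qed.

Lemma rsum_mean_Rabs_le (n : nat) (f : nat -> R) (A : R) :
  (0 < n)%nat -> (forall r, (r < n)%nat -> Rabs (f r) <= A) -> Rabs (/ INR n * rsum n f) <= A.
Proof.
  intros Hn H. assert (0 < INR n) by (apply lt_0_INR; auto).
  rewrite Rabs_mult, Rabs_inv, (Rabs_pos_eq (INR n)) by lra.
  apply (Rmult_le_reg_l (INR n)); auto. rewrite <- Rmult_assoc, Rinv_r, Rmult_1_l by lra.
  apply rsum_Rabs_le. auto.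
Qed.

Definition transfer (b : nat) (f : R -> R) (y : R) : R :=
  / INR b * rsum b (fun r => f ((y + INR r) / INR b)).

Section Transfer.

Variable b : nat.
Hypothesis hb : (0 < b)%nat.

Let hb_pos : 0 < INR b.
Proof. apply lt_0_INR. exact hb. Qed.

Lemma transfer_Rabs_le (f : R -> R) (A : R) :
  (forall x, Rabs (f x) <= A) -> forall y, Rabs (transfer b f y) <= A.
Proof. intros H y. apply rsum_mean_Rabs_le; auto. Qed.

Lemma transfer_lipschitz (f : R -> R) (L : R) :
  (forall x y, Rabs (f x - f y) <= L * Rabs (x - y)) ->
  forall x y, Rabs (transfer b f x - transfer b f y) <= L / INR b * Rabs (x - y).
Proof.
  intros H x y. unfold transfer. rewrite <- Rmult_minus_distr_l, <- rsum_minus.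
  rewrite Rabs_mult, Rabs_inv, (Rabs_pos_eq (INR b)) by lra.
  apply (Rmult_le_reg_l (INR b)); auto. rewrite <- Rmult_assoc, Rinv_r, Rmult_1_l by lra.
  replace (INR b * (L / INR b * Rabs (x - y))) with (INR b * (L * Rabs ((x - y) / INR b)))
    by (unfold Rdiv; rewrite Rabs_mult, Rabs_inv, (Rabs_pos_eq (INR b)); [field|]; lra).
  apply rsum_Rabs_le. intros r _. eapply Rle_trans; [apply H|]. right. do 2 f_equal. field. lra.
Qed.

Lemma transfer_Z_periodic (f : R -> R) : Z_periodic f -> Z_periodic (transfer b f).
Proof.
  intros H y. unfold transfer. f_equal.
  set (h r := f ((y + INR r) / INR b)).
  rewrite (rsum_ext b _ (fun r => h (S r)))
    by (intros r _; unfold h; rewrite S_INR; do 2 f_equal; ring).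
  rewrite rsum_shift. unfold h at 2 3.
  replace ((y + INR b) / INR b) with (y / INR b + 1) by (field; lra).
  rewrite H, Rplus_0_r. ring.
Qed.

Lemma transfer_mul (f : R -> R) (y : R) :
  INR b * transfer b f (INR b * y) = rsum b (fun r => f (y + INR r / INR b)).
Proof.
  unfold transfer. rewrite <- Rmult_assoc, Rinv_r, Rmult_1_l by lra.
  apply rsum_ext. intros r _. f_equal. field. lra.
Qed.

End Transfer.

Lemma is_series_telescope (v : nat -> R) (K q : R) :
  0 <= q < 1 -> (forall n, Rabs (v n) <= K * q ^ n) ->
  is_series (fun n => v n - v (S n)) (v 0%nat).
Proof.
  intros Hq Hv. apply is_series_Reals. intros eps Heps.
  assert (HK : 0 <= K)
    by (specialize (Hv 0%nat); simpl in Hv; pose proof (Rabs_pos (v 0%nat)); lra).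
  pose proof (is_lim_seq_geom q ltac:(rewrite Rabs_pos_eq; lra)) as L.
  apply is_lim_seq_spec in L.
  destruct (L (mkposreal (eps / (K + 1)) ltac:(apply Rdiv_lt_0_compat; lra))) as [N HN].
  exists N. intros n Hn.
  assert (Hs : forall n, sum_f_R0 (fun n => v n - v (S n)) n = v 0%nat - v (S n))
    by (induction n0; simpl; [|rewrite IHn0]; ring).
  unfold R_dist. rewrite Hs. replace (v 0%nat - v (S n) - v 0%nat) with (- v (S n)) by ring.
  rewrite Rabs_Ropp. eapply Rle_lt_trans; [apply Hv|].
  specialize (HN (S n) ltac:(lia)). simpl in HN.
  rewrite Rminus_0_r, Rabs_pos_eq in HN by (apply Rmult_le_pos; [|apply pow_le]; lra).
  apply Rle_lt_trans with ((K + 1) * q ^ S n).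
  - apply Rmult_le_compat_r; [apply pow_le|]; lra.
  - apply (Rmult_lt_compat_l (K + 1)) in HN; [|lra].
    replace ((K + 1) * (eps / (K + 1))) with eps in HN by (field; lra). simpl. lra.
Qed.

Definition resolvent (b : nat) (g : R) (phi : R -> R) (y : R) : R :=
  Series (fun n => g ^ n * Nat.iter (S n) (transfer b) phi y).

(** With [G := resolvent b g phi = L (1 - g L)^-1 phi] for the transfer operator [L],
    [phi y = psi y + G (b y) - g G y]; the coboundary part telescopes in [S_fun],
    and [L psi = 0]. *)
Definition psi (b : nat) (g : R) (phi : R -> R) (y : R) : R :=
  phi y - resolvent b g phi (INR b * y) + g * resolvent b g phi y.

Section Decomposition.

Variables (b : nat) (g : R) (phi : R -> R) (M : R).
Hypotheses (hb : (0 < b)%nat) (hg : 0 < g < 1) (hper : Z_periodic phi)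
  (hM : forall x, Rabs (phi x) <= M).

Let hb_pos : 0 < INR b.
Proof. apply lt_0_INR. exact hb. Qed.

Let hg_abs : Rabs g < 1.
Proof. rewrite Rabs_pos_eq; lra. Qed.

Lemma iter_transfer_Rabs_le (n : nat) (y : R) : Rabs (Nat.iter n (transfer b) phi y) <= M.
Proof.
  revert y. induction n as [|n IH]; intros y; [apply hM|]. apply transfer_Rabs_le; auto.
Qed.

Lemma iter_transfer_Z_periodic (n : nat) : Z_periodic (Nat.iter n (transfer b) phi).
Proof. induction n as [|n IH]; [exact hper|]. apply transfer_Z_periodic; auto. Qed.

Lemma ex_series_resolvent (y : R) : ex_series (fun n => g ^ n * Nat.iter (S n) (transfer b) phi y).
Proof.
  apply (ex_series_geom_bound _ g M); auto. intros n.
  rewrite Rabs_mult, <- RPow_abs. apply Rmult_le_compat_l; [apply pow_le, Rabs_pos|].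
  apply iter_transfer_Rabs_le.
Qed.

Lemma resolvent_Rabs_le (y : R) : Rabs (resolvent b g phi y) <= M / (1 - g).
Proof.
  unfold resolvent. rewrite <- Series_geom_scal by auto.
  apply Series_Rabs_le; [|apply ex_series_geom_scal; auto].
  intros n. rewrite Rabs_mult, Rabs_pos_eq by (apply pow_le; lra).
  apply Rmult_le_compat_l; [apply pow_le; lra | apply iter_transfer_Rabs_le].
Qed.

Lemma resolvent_Z_periodic : Z_periodic (resolvent b g phi).
Proof. intros y. apply Series_ext. intros n. rewrite iter_transfer_Z_periodic. auto. Qed.

Lemma resolvent_lipschitz (L : R) :
  0 <= L -> (forall x y, Rabs (phi x - phi y) <= L * Rabs (x - y)) ->
  forall x y, Rabs (resolvent b g phi x - resolvent b g phi y) <= L / (1 - g) * Rabs (x - y).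
Proof.
  intros HL0 HL.
  assert (Hit : forall n x y, Rabs (Nat.iter n (transfer b) phi x - Nat.iter n (transfer b) phi y)
                              <= L * Rabs (x - y)).
  { induction n as [|n IH]; intros x y; [apply HL|].
    eapply Rle_trans; [apply (transfer_lipschitz b hb _ L IH)|].
    apply Rmult_le_compat_r; [apply Rabs_pos|].
    unfold Rdiv. rewrite <- (Rmult_1_r L) at 2. apply Rmult_le_compat_l; auto.
    rewrite <- Rinv_1. apply Rinv_le_contravar; [lra|]. apply (le_INR 1). lia. }
  intros x y. unfold resolvent. rewrite <- Series_minus by apply ex_series_resolvent.
  replace (L / (1 - g) * Rabs (x - y)) with (L * Rabs (x - y) / (1 - g)) by (field; lra).
  rewrite <- Series_geom_scal by auto.
  apply Series_Rabs_le; [|apply ex_series_geom_scal; auto].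
  intros n. rewrite <- Rmult_minus_distr_l, Rabs_mult, Rabs_pos_eq by (apply pow_le; lra).
  apply Rmult_le_compat_l; [apply pow_le; lra | apply Hit].
Qed.

Lemma resolvent_fixpoint (y : R) :
  resolvent b g phi y = transfer b phi y + g * transfer b (resolvent b g phi) y.
Proof.
  unfold resolvent at 1. rewrite Series_incr_1 by apply ex_series_resolvent.
  simpl pow. rewrite Rmult_1_l. f_equal.
  unfold transfer at 2, resolvent. rewrite <- Series_rsum by (intros; apply ex_series_resolvent).
  rewrite <- !Series_scal_l. apply Series_ext. intros n.
  rewrite rsum_scal. simpl Nat.iter. unfold transfer at 1. ring.
Qed.

Lemma transfer_psi (y : R) : transfer b (psi b g phi) y = 0.
Proof.
  assert (Hcob : transfer b (fun x => resolvent b g phi (INR b * x)) y = resolvent b g phi y).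
  { unfold transfer.
    rewrite (rsum_ext _ _ (fun _ => resolvent b g phi y)), rsum_const by
      (intros r _; replace (INR b * ((y + INR r) / INR b)) with (y + INR r) by (field; lra);
       apply Z_periodic_add_INR, resolvent_Z_periodic).
    field. lra. }
  unfold transfer at 1, psi. unfold transfer in Hcob.
  rewrite rsum_plus, rsum_minus, rsum_scal, Rmult_plus_distr_l, Rmult_minus_distr_l, Hcob.
  fold (transfer b phi y).
  replace (/ INR b * (g * rsum b (fun r => resolvent b g phi ((y + INR r) / INR b))))
    with (g * transfer b (resolvent b g phi) y) by (unfold transfer; ring).
  rewrite (resolvent_fixpoint y). ring.
Qed.

Lemma psi_Z_periodic : Z_periodic (psi b g phi).
Proof.
  intros y. unfold psi. rewrite hper, resolvent_Z_periodic, Rmult_plus_distr_l, Rmult_1_r.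
  rewrite Z_periodic_add_INR by apply resolvent_Z_periodic. auto.
Qed.

Lemma psi_Rabs_le (y : R) : Rabs (psi b g phi y) <= M + 2 * (M / (1 - g)).
Proof.
  unfold psi.
  pose proof (resolvent_Rabs_le (INR b * y)). pose proof (resolvent_Rabs_le y). pose proof (hM y).
  assert (Rabs (g * resolvent b g phi y) <= M / (1 - g)).
  { rewrite Rabs_mult, Rabs_pos_eq by lra. pose proof (Rabs_pos (resolvent b g phi y)). nra. }
  eapply Rle_trans; [apply Rabs_triang|].
  eapply Rle_trans; [apply Rplus_le_compat_r, Rabs_triang|]. rewrite Rabs_Ropp. lra.
Qed.

Lemma psi_lipschitz (L : R) :
  0 <= L -> (forall x y, Rabs (phi x - phi y) <= L * Rabs (x - y)) ->
  forall x y, Rabs (psi b g phi x - psi b g phi y)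
              <= (L + INR b * (L / (1 - g)) + L / (1 - g)) * Rabs (x - y).
Proof.
  intros HL0 HL x y. unfold psi.
  pose proof (HL x y) as H1.
  pose proof (resolvent_lipschitz L HL0 HL (INR b * x) (INR b * y)) as H2.
  pose proof (resolvent_lipschitz L HL0 HL x y) as H3.
  rewrite <- Rmult_minus_distr_l, Rabs_mult, (Rabs_pos_eq (INR b)) in H2 by lra.
  replace (phi x - resolvent b g phi (INR b * x) + g * resolvent b g phi x
           - (phi y - resolvent b g phi (INR b * y) + g * resolvent b g phi y))
    with ((phi x - phi y) + - (resolvent b g phi (INR b * x) - resolvent b g phi (INR b * y))
          + g * (resolvent b g phi x - resolvent b g phi y)) by ring.
  eapply Rle_trans; [apply Rabs_triang|].
  eapply Rle_trans; [apply Rplus_le_compat_r, Rabs_triang|].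
  rewrite Rabs_Ropp, Rabs_mult, (Rabs_pos_eq g) by lra.
  assert (g * Rabs (resolvent b g phi x - resolvent b g phi y) <= L / (1 - g) * Rabs (x - y)).
  { pose proof (Rabs_pos (resolvent b g phi x - resolvent b g phi y)). nra. }
  lra.
Qed.

Lemma S_fun_decomp (x : R) (w : nat -> nat) :
  S_fun b g phi x w = resolvent b g phi x + S_fun b g (psi b g phi) x w.
Proof.
  set (y m := (x + digit_partial b w m) / INR b ^ m).
  set (v m := g ^ m * resolvent b g phi (y m)).
  assert (Ht : is_series (fun m => v m - v (S m)) (v 0%nat)).
  { apply (is_series_telescope v (M / (1 - g)) g); [lra|]. intros n. unfold v.
    rewrite Rabs_mult, Rabs_pos_eq, Rmult_comm by (apply pow_le; lra).
    apply Rmult_le_compat_r; [apply pow_le; lra | apply resolvent_Rabs_le]. }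
  assert (Hv0 : v 0%nat = resolvent b g phi x).
  { unfold v, y. simpl. rewrite Rmult_1_l, Rplus_0_r, Rdiv_1_r. auto. }
  assert (Hex : ex_series (fun m =>
                 g ^ m * psi b g phi ((x + digit_partial b w (S m)) / INR b ^ S m))).
  { apply (ex_series_geom_bound _ g (M + 2 * (M / (1 - g)))); auto. intros m.
    rewrite Rabs_mult, <- RPow_abs. apply Rmult_le_compat_l; [apply pow_le, Rabs_pos|].
    apply psi_Rabs_le. }
  unfold S_fun.
  rewrite (Series_ext _ (fun m => g ^ m * psi b g phi ((x + digit_partial b w (S m)) / INR b ^ S m)
                                  + (v m - v (S m)))).
  - rewrite Series_plus by (auto; eexists; exact Ht).
    rewrite (is_series_unique _ _ Ht), Hv0. ring.
  - intros m. unfold v, psi. fold (y (S m)).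
    replace (INR b * y (S m)) with (y m + INR (w m))
      by (unfold y; simpl; field; split; [apply pow_nonzero|]; lra).
    rewrite Z_periodic_add_INR by apply resolvent_Z_periodic. simpl pow. ring.
Qed.

End Decomposition.

(** * Averaging over shifts *)

Definition S_partial (b : nat) (g : R) (f : R -> R) (n : nat) (x : R) (w : nat -> nat) : R :=
  rsum n (fun m => g ^ m * f ((x + digit_partial b w (S m)) / INR b ^ S m)).

Section Averaging.

Variables (b : nat) (g A : R) (f : R -> R).
Hypotheses (hb : (0 < b)%nat) (hg : 0 < g < 1) (hper : Z_periodic f)
  (hA : forall x, Rabs (f x) <= A) (hmean : forall y, transfer b f y = 0).

Let hb_pos : 0 < INR b.
Proof. apply lt_0_INR. exact hb. Qed.

Let hbk (k : nat) : INR b ^ k <> 0.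
Proof. apply pow_nonzero. lra. Qed.

Lemma block_sum_eq0 (k : nat) (w : R) :
  (1 <= k)%nat -> rsum (b ^ k) (fun q => f (w + INR q / INR b ^ k)) = 0.
Proof.
  intros Hk. destruct k as [|k]; [lia|].
  change (b ^ S k)%nat with (b * b ^ k)%nat.
  rewrite rsum_mul, rsum_swap. apply rsum_eq0. intros q _.
  rewrite <- (Rmult_0_r (INR b)), <- (hmean (INR b * (w + INR q / INR b ^ S k))).
  rewrite transfer_mul by auto.
  apply rsum_ext. intros s _. f_equal.
  rewrite plus_INR, mult_INR, pow_INR. simpl pow. field. split; [lra | apply hbk].
Qed.

Lemma block_sum_eq0_mul (K k : nat) (w : R) :
  (1 <= k <= K)%nat -> rsum (b ^ K) (fun q => f (w + INR q / INR b ^ k)) = 0.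
Proof.
  intros Hk.
  replace (b ^ K)%nat with (b ^ (K - k) * b ^ k)%nat by (rewrite <- Nat.pow_add_r; f_equal; lia).
  rewrite rsum_mul. apply rsum_eq0. intros s _.
  rewrite <- (block_sum_eq0 k w) by lia. apply rsum_ext. intros q _.
  rewrite plus_INR, mult_INR, pow_INR.
  replace (w + (INR b ^ k * INR s + INR q) / INR b ^ k) with ((w + INR q / INR b ^ k) + INR s)
    by (field; auto).
  apply Z_periodic_add_INR, hper.
Qed.

Lemma ex_series_S_fun_terms (x : R) (w : nat -> nat) :
  ex_series (fun m => g ^ m * f ((x + digit_partial b w (S m)) / INR b ^ S m)).
Proof.
  apply (ex_series_geom_bound _ g A); [rewrite Rabs_pos_eq; lra|]. intros m.
  rewrite Rabs_mult, <- RPow_abs. apply Rmult_le_compat_l; [apply pow_le, Rabs_pos | apply hA].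
Qed.

Lemma shifted_mean_head (z d : R) (n m K : nat) :
  (m < n)%nat ->
  / INR b ^ K * rsum (b ^ K) (fun q => f ((z + INR b ^ n * INR q + d) / INR b ^ S m))
  = f ((z + d) / INR b ^ S m).
Proof.
  intros Hm.
  rewrite (rsum_ext _ _ (fun _ => f ((z + d) / INR b ^ S m))), rsum_const, pow_INR.
  - field. auto.
  - intros q _.
    replace ((z + INR b ^ n * INR q + d) / INR b ^ S m)
      with ((z + d) / INR b ^ S m + INR (b ^ (n - S m) * q)).
    + apply Z_periodic_add_INR, hper.
    + rewrite mult_INR, pow_INR.
      replace n with ((n - S m) + S m)%nat at 2 by lia. rewrite pow_add. field. auto.
Qed.

Lemma shifted_sum_block (z d : R) (n r K : nat) :
  (r < K)%nat ->
  rsum (b ^ K) (fun q => f ((z + INR b ^ n * INR q + d) / INR b ^ S (n + r))) = 0.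
Proof.
  intros Hr. rewrite <- (block_sum_eq0_mul K (S r) ((z + d) / INR b ^ S (n + r))) by lia.
  apply rsum_ext. intros q _. f_equal.
  replace (S (n + r)) with (n + S r)%nat by lia. rewrite pow_add. field. auto.
Qed.

(** Averaging over the shifts [z + b^n q], [q < b^K], keeps the first [n] terms of
    [S_fun], kills the next [K] ones, and leaves a geometrically small tail. *)
Lemma S_fun_average (z : R) (w : nat -> nat) (n K : nat) :
  (1 <= K)%nat ->
  Rabs (/ INR b ^ K * rsum (b ^ K) (fun q => S_fun b g f (z + INR b ^ n * INR q) w)
        - S_partial b g f n z w) <= A * g ^ (n + K) / (1 - g).
Proof.
  intros HK.
  set (a m := g ^ m * (/ INR b ^ K * rsum (b ^ K) (fun q =>
         f ((z + INR b ^ n * INR q + digit_partial b w (S m)) / INR b ^ S m)))).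
  assert (Ha : forall m, Rabs (a m) <= g ^ m * A).
  { intros m. unfold a. rewrite Rabs_mult, Rabs_pos_eq by (apply pow_le; lra).
    apply Rmult_le_compat_l; [apply pow_le; lra|]. rewrite <- pow_INR.
    apply rsum_mean_Rabs_le; [apply Nat.neq_0_lt_0, Nat.pow_nonzero; lia|]. auto. }
  assert (Havg : / INR b ^ K * rsum (b ^ K) (fun q => S_fun b g f (z + INR b ^ n * INR q) w)
                 = Series a).
  { unfold S_fun. rewrite <- Series_rsum by (intros; apply ex_series_S_fun_terms).
    rewrite <- Series_scal_l. apply Series_ext. intros m. unfold a. rewrite rsum_scal. ring. }
  assert (Hhead : rsum n a = S_partial b g f n z w).
  { apply rsum_ext. intros m Hm. unfold a. rewrite shifted_mean_head; auto. }
  assert (Hblocks : rsum K (fun r => a (n + r)%nat) = 0).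
  { apply rsum_eq0. intros r Hr. unfold a. rewrite shifted_sum_block by auto. ring. }
  rewrite Havg, (Series_incr_n a (n + K)), rsum_sum_f_R0.
  2: lia.
  2: { apply (ex_series_geom_bound _ g A); [rewrite Rabs_pos_eq; lra|].
       intros m. rewrite (Rabs_pos_eq g) by lra. apply Ha. }
  replace (S (Init.Nat.pred (n + K))) with (n + K)%nat by lia.
  rewrite rsum_add, Hhead, Hblocks.
  replace (S_partial b g f n z w + 0 + Series (fun k => a (n + K + k)%nat) - S_partial b g f n z w)
    with (Series (fun k => a (n + K + k)%nat)) by ring.
  eapply Rle_trans; [apply (Series_Rabs_le _ (fun k => g ^ k * (g ^ (n + K) * A)))|].
  - intros k. eapply Rle_trans; [apply Ha|]. rewrite pow_add. right. ring.
  - apply ex_series_geom_scal. rewrite Rabs_pos_eq; lra.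
  - rewrite Series_geom_scal by (rewrite Rabs_pos_eq; lra). right. field. lra.
Qed.

Lemma S_partial_eq_of_S_fun_eq (i j : nat -> nat) :
  (forall z, S_fun b g f z i = S_fun b g f z j) ->
  forall n z, S_partial b g f n z i = S_partial b g f n z j.
Proof.
  intros HS n z.
  enough (S_partial b g f n z i - S_partial b g f n z j = 0) by lra.
  apply (le_geom_eq0 _ (2 * (A * g ^ (n + 1) / (1 - g))) g); [lra|]. intros k.
  pose proof (S_fun_average z i n (S k) ltac:(lia)) as Ai.
  pose proof (S_fun_average z j n (S k) ltac:(lia)) as Aj.
  rewrite (rsum_ext _ _ (fun q => S_fun b g f (z + INR b ^ n * INR q) j)) in Ai by auto.
  set (avg := / INR b ^ S k * rsum (b ^ S k) (fun q => S_fun b g f (z + INR b ^ n * INR q) j))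
    in Ai, Aj.
  replace (2 * (A * g ^ (n + 1) / (1 - g)) * g ^ k) with (2 * (A * g ^ (n + S k) / (1 - g)))
    by (rewrite !pow_add; simpl; field; lra).
  replace (S_partial b g f n z i - S_partial b g f n z j)
    with (- (avg - S_partial b g f n z i) + (avg - S_partial b g f n z j)) by ring.
  eapply Rle_trans; [apply Rabs_triang|]. rewrite Rabs_Ropp. lra.
Qed.

Lemma S_fun_eq_periods (i j : nat -> nat) :
  (forall z, S_fun b g f z i = S_fun b g f z j) ->
  forall N y, f (y + (digit_partial b j N - digit_partial b i N) / INR b ^ N) = f y.
Proof.
  intros HS N y. destruct N as [|N]; [simpl; f_equal; field|].
  pose proof (S_partial_eq_of_S_fun_eq i j HS) as HP.
  set (z := INR b ^ S N * y - digit_partial b i (S N)).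
  pose proof (HP (S N) z) as H1. unfold S_partial in H1. cbn [rsum] in H1.
  fold (S_partial b g f N z i) (S_partial b g f N z j) in H1. rewrite (HP N z) in H1.
  apply Rplus_eq_reg_l, Rmult_eq_reg_l in H1; [|apply pow_nonzero; lra].
  replace ((z + digit_partial b i (S N)) / INR b ^ S N) with y in H1 by (unfold z; field; auto).
  rewrite H1. f_equal. unfold z. field. auto.
Qed.

End Averaging.

(** * Arbitrarily small periods *)

Lemma Z_nondecreasing_bounded_stable (c : nat -> Z) (q : Z) :
  (forall N, (c N <= q)%Z) -> (forall N N', (N <= N')%nat -> (c N <= c N')%Z) ->
  exists N1, forall N, (N1 <= N)%nat -> c N = c N1.
Proof.
  intros Hq Hm.
  enough (H : forall m N0, (Z.to_nat (q - c N0) <= m)%nat ->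
                exists N1, forall N, (N1 <= N)%nat -> c N = c N1)
    by exact (H _ 0%nat (le_n _)).
  induction m as [|m IH]; intros N0 HN0.
  - exists N0. intros N HN. pose proof (Hm N0 N HN). pose proof (Hq N). lia.
  - destruct (classic (exists N, (N0 <= N)%nat /\ c N <> c N0)) as [[N [H1 H2]]|Hn].
    + apply (IH N). pose proof (Hm N0 N H1). pose proof (Hq N). pose proof (Hq N0). lia.
    + exists N0. intros N HN. apply NNPP. intros E. apply Hn. eauto.
Qed.

(** The factors of [q] shared with the powers of [b] are eventually absorbed:
    [gcd (b^N) q] stabilizes, after which [b^N | q * D] forces [b^(N - N1) | D]. *)
Lemma Zpow_divide_of_divide_mul (b q : Z) (D : nat -> Z) (L : nat) :
  (2 <= b)%Z -> (1 <= q)%Z -> (forall N, (b ^ Z.of_nat N | q * D N)%Z) ->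
  exists N, (L <= N)%nat /\ (b ^ Z.of_nat L | D N)%Z.
Proof.
  intros Hb Hq HD.
  set (P N := (b ^ Z.of_nat N)%Z).
  assert (HP : forall N, (0 < P N)%Z) by (intros; apply Z.pow_pos_nonneg; lia).
  set (c N := Z.gcd (P N) q).
  assert (Hc : forall N, (0 < c N <= q)%Z).
  { intros N. split.
    - pose proof (Z.gcd_nonneg (P N) q). pose proof (HP N).
      unfold c. destruct (Z.eq_dec (Z.gcd (P N) q) 0) as [E|E]; [apply Z.gcd_eq_0 in E|]; lia.
    - apply Z.divide_pos_le; [lia | apply Z.gcd_divide_r]. }
  assert (Hcd : forall N, (c N | c (S N))%Z).
  { intros N. apply Z.gcd_greatest; [|apply Z.gcd_divide_r].
    unfold P. rewrite Nat2Z.inj_succ, Z.pow_succ_r by lia.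
    apply Z.divide_mul_r, Z.gcd_divide_l. }
  assert (Hm : forall N N', (N <= N')%nat -> (c N <= c N')%Z).
  { intros N N' H. induction H; [lia|]. eapply Z.le_trans; [apply IHle|].
    apply Z.divide_pos_le; [apply Hc | apply Hcd]. }
  destruct (Z_nondecreasing_bounded_stable c q (fun N => proj2 (Hc N)) Hm) as [N1 HN1].
  exists (N1 + L)%nat. split; [lia|].
  set (N := (N1 + L)%nat). set (cc := c N).
  assert (Hcc : (0 < cc)%Z) by apply Hc.
  destruct (Z.gcd_divide_l (P N) q) as [beta Hbeta]. fold (c N) cc in Hbeta.
  destruct (Z.gcd_divide_r (P N) q) as [kappa Hkappa]. fold (c N) cc in Hkappa.
  assert (Hcop : Z.gcd beta kappa = 1%Z).
  { replace beta with (P N / cc)%Z by (rewrite Hbeta, Z.div_mul; lia).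
    replace kappa with (q / cc)%Z by (rewrite Hkappa at 1; rewrite Z.div_mul; lia).
    apply Z.gcd_div_gcd; auto. lia. }
  assert (Hbeta_D : (beta | D N)%Z).
  { apply (Z.gauss _ kappa); auto. apply (Z.mul_divide_cancel_l _ _ cc); [lia|].
    replace (cc * beta)%Z with (P N) by lia. replace (cc * (kappa * D N))%Z with (q * D N)%Z by lia.
    apply HD. }
  destruct (Z.gcd_divide_l (P N1) q) as [s Hs]. fold (c N1) in Hs.
  rewrite <- (HN1 N) in Hs by (unfold N; lia). fold cc in Hs.
  assert (Hbeta_L : beta = (s * P L)%Z).
  { apply (Z.mul_cancel_l _ _ cc); [lia|].
    rewrite Z.mul_comm, <- Hbeta. unfold N, P. rewrite Nat2Z.inj_add, Z.pow_add_r by lia.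
    fold (P N1). rewrite Hs. fold (P L). ring. }
  apply (Z.divide_trans _ beta); auto. rewrite Hbeta_L. apply Z.divide_factor_r.
Qed.

Fixpoint digit_partialZ (b : nat) (w : nat -> nat) (n : nat) : Z :=
  match n with
  | O => 0%Z
  | S m => (digit_partialZ b w m + Z.of_nat (w m) * Z.of_nat b ^ Z.of_nat m)%Z
  end.

Lemma IZR_digit_partialZ (b : nat) (w : nat -> nat) (n : nat) :
  IZR (digit_partialZ b w n) = digit_partial b w n.
Proof.
  induction n; simpl; auto.
  rewrite plus_IZR, mult_IZR, IHn, <- pow_IZR, <- !INR_IZR_INZ. auto.
Qed.

Lemma digit_partialZ_ext (b : nat) (i j : nat -> nat) (n : nat) :
  (forall k, (k < n)%nat -> i k = j k) -> digit_partialZ b i n = digit_partialZ b j n.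
Proof. induction n; intros H; simpl; auto. rewrite IHn, H; auto. Qed.

Lemma digit_partialZ_add (b : nat) (w : nat -> nat) (L t : nat) :
  exists Y, digit_partialZ b w (L + t) = (digit_partialZ b w L + Z.of_nat b ^ Z.of_nat L * Y)%Z.
Proof.
  induction t as [|t [Y HY]]; [exists 0%Z; rewrite Nat.add_0_r; ring|].
  exists (Y + Z.of_nat (w (L + t)%nat) * Z.of_nat b ^ Z.of_nat t)%Z.
  rewrite Nat.add_succ_r. simpl. rewrite HY, Nat2Z.inj_add, Z.pow_add_r by lia. ring.
Qed.

(** If [n0] is the first index where [i] and [j] differ, then [D_N mod b^(n0+1)]
    is [(j n0 - i n0) b^n0 <> 0] for every [N > n0]. *)
Lemma digit_partialZ_diff_not_divide (b : nat) (i j : nat -> nat) :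
  is_digit_seq b i -> is_digit_seq b j -> (exists k, i k <> j k) ->
  exists L, forall N, (L <= N)%nat ->
    ~ (Z.of_nat b ^ Z.of_nat L | digit_partialZ b j N - digit_partialZ b i N)%Z.
Proof.
  intros Hi Hj Hk.
  destruct (dec_inh_nat_subset_has_unique_least_element (fun k => i k <> j k))
    as [n0 [[Hn0 Hmin] _]].
  { intros k. destruct (Nat.eq_dec (i k) (j k)); auto. }
  { exact Hk. }
  assert (Heq : digit_partialZ b i n0 = digit_partialZ b j n0).
  { apply digit_partialZ_ext. intros k Hk'.
    destruct (Nat.eq_dec (i k) (j k)) as [E|E]; auto. specialize (Hmin k E). lia. }
  exists (S n0). intros N HN Hdiv.
  destruct (digit_partialZ_add b i (S n0) (N - S n0)) as [Yi HYi].
  destruct (digit_partialZ_add b j (S n0) (N - S n0)) as [Yj HYj].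
  replace (S n0 + (N - S n0))%nat with N in HYi, HYj by lia.
  rewrite HYi, HYj in Hdiv.
  set (B := Z.of_nat b) in *.
  assert (Hd : (B ^ Z.of_nat (S n0) | B ^ Z.of_nat n0 * (Z.of_nat (j n0) - Z.of_nat (i n0)))%Z).
  { replace (B ^ Z.of_nat n0 * (Z.of_nat (j n0) - Z.of_nat (i n0)))%Z
      with (digit_partialZ b j (S n0) + B ^ Z.of_nat (S n0) * Yj
            - (digit_partialZ b i (S n0) + B ^ Z.of_nat (S n0) * Yi)
            - B ^ Z.of_nat (S n0) * (Yj - Yi))%Z by (simpl; rewrite Heq; fold B; ring).
    apply Z.divide_sub_r; auto. apply Z.divide_factor_l. }
  rewrite Nat2Z.inj_succ, Z.pow_succ_r, (Z.mul_comm B) in Hd by lia.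
  apply Z.mul_divide_cancel_l in Hd; [|apply Z.pow_nonzero; pose proof (Hi n0); lia].
  destruct Hd as [t Ht]. pose proof (Hi n0). pose proof (Hj n0).
  destruct (Z.eq_dec t 0) as [E|E]; [subst; lia | nia].
Qed.

Lemma Nat_divide_fact (n h : nat) : (1 <= h <= n)%nat -> Nat.divide h (fact n).
Proof.
  induction n; intros H; [lia|]. simpl fact.
  destruct (Nat.eq_dec h (S n)) as [->|E].
  - exists (fact n). lia.
  - destruct (IHn ltac:(lia)) as [k Hk]. exists (k + n * k)%nat. rewrite Hk. lia.
Qed.

(** Otherwise [b^N / gcd (D_N, b^N) <= K] would divide [K!], so [b^N | K! D_N] for all [N]. *)
Lemma digit_diff_gcd_small (b : nat) (i j : nat -> nat) (K : Z) :
  (2 <= b)%nat -> is_digit_seq b i -> is_digit_seq b j -> (exists k, i k <> j k) -> (1 <= K)%Z ->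
  exists N, let D := (digit_partialZ b j N - digit_partialZ b i N)%Z in
            let P := (Z.of_nat b ^ Z.of_nat N)%Z in
            (K * Z.gcd D P < P)%Z.
Proof.
  intros Hb Hi Hj Hk HK.
  destruct (digit_partialZ_diff_not_divide b i j Hi Hj Hk) as [L HL].
  set (D N := (digit_partialZ b j N - digit_partialZ b i N)%Z).
  set (P N := (Z.of_nat b ^ Z.of_nat N)%Z).
  assert (HP : forall N, (0 < P N)%Z) by (intros; apply Z.pow_pos_nonneg; lia).
  apply NNPP. intros Hn.
  set (q := Z.of_nat (fact (Z.to_nat K))).
  destruct (Zpow_divide_of_divide_mul (Z.of_nat b) q D L) as [N [HLN HdivN]].
  - lia.
  - pose proof (lt_O_fact (Z.to_nat K)). unfold q. lia.
  - intros N. fold (P N).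
    assert (Hle : (P N <= K * Z.gcd (D N) (P N))%Z) by (apply Z.nlt_ge; intros C; apply Hn; eauto).
    pose proof (Z.gcd_nonneg (D N) (P N)).
    destruct (Z.gcd_divide_r (D N) (P N)) as [h Hh].
    destruct (Z.gcd_divide_l (D N) (P N)) as [d Hd].
    set (gN := Z.gcd (D N) (P N)) in *.
    assert (Hh1 : (1 <= h <= K)%Z) by (pose proof (HP N); split; nia).
    destruct (Nat_divide_fact (Z.to_nat K) (Z.to_nat h) ltac:(lia)) as [q' Hq'].
    exists (Z.of_nat q' * d)%Z. rewrite Hd, Hh. unfold q. rewrite Hq', Nat2Z.inj_mul.
    rewrite Z2Nat.id by lia. ring.
  - exact (HL N HLN HdivN).
Qed.

(** The group [Z + Z (D_N / b^N)] is [(gcd (D_N, b^N) / b^N) Z]. *)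
Lemma digit_diff_small_period (b : nat) (i j : nat -> nat) :
  (2 <= b)%nat -> is_digit_seq b i -> is_digit_seq b j -> (exists k, i k <> j k) ->
  forall eps, 0 < eps -> exists N (u v : Z),
    0 < IZR u * ((digit_partial b j N - digit_partial b i N) / INR b ^ N) + IZR v < eps.
Proof.
  intros Hb Hi Hj Hk eps Heps.
  set (K := up (/ eps)).
  destruct (archimed (/ eps)) as [HK _]. fold K in HK.
  assert (HK1 : (1 <= K)%Z).
  { assert (0 < / eps) by (apply Rinv_0_lt_compat; auto).
    assert (H0 : 0 < IZR K) by lra. apply lt_IZR in H0. lia. }
  destruct (digit_diff_gcd_small b i j K Hb Hi Hj Hk HK1) as [N HN]. simpl in HN.
  set (D := (digit_partialZ b j N - digit_partialZ b i N)%Z) in HN.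
  set (P := (Z.of_nat b ^ Z.of_nat N)%Z) in HN.
  assert (HP : (0 < P)%Z) by (apply Z.pow_pos_nonneg; lia).
  assert (Hg : (0 < Z.gcd D P)%Z).
  { pose proof (Z.gcd_nonneg D P).
    destruct (Z.eq_dec (Z.gcd D P) 0) as [E|E]; [apply Z.gcd_eq_0 in E|]; lia. }
  destruct (Z.gcd_bezout D P (Z.gcd D P) eq_refl) as [u [v Huv]].
  exists N, u, v.
  assert (HPR : INR b ^ N = IZR P) by (unfold P; rewrite <- pow_IZR, <- INR_IZR_INZ; auto).
  assert (HPp : 0 < IZR P) by (apply IZR_lt; auto).
  assert (HgR : 0 < IZR (Z.gcd D P)) by (apply IZR_lt; auto).
  replace (IZR u * ((digit_partial b j N - digit_partial b i N) / INR b ^ N) + IZR v)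
    with (IZR (Z.gcd D P) / IZR P).
  2: { rewrite HPR, <- !IZR_digit_partialZ, <- Huv, plus_IZR, !mult_IZR. unfold D.
       rewrite minus_IZR. field. lra. }
  split; [apply Rdiv_lt_0_compat; auto|].
  apply IZR_lt in HN. rewrite mult_IZR in HN.
  apply (Rmult_lt_reg_r (IZR P)); auto. unfold Rdiv. rewrite Rmult_assoc, Rinv_l by lra.
  assert (eps * IZR K > 1).
  { apply (Rmult_lt_compat_l eps) in HK; auto. rewrite Rinv_r in HK by lra. lra. }
  nra.
Qed.

Lemma lipschitz_small_periods_const (f : R -> R) (K : R) :
  (forall x y, Rabs (f x - f y) <= K * Rabs (x - y)) ->
  (forall eps, 0 < eps -> exists th, 0 < th < eps /\ forall y, f (y + th) = f y) ->
  forall y, f y = f 0.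
Proof.
  intros HL HP y.
  enough (f y - f 0 = 0) by lra.
  apply (le_mul_small_eq0 _ K 1); [lra|].
  intros s Hs. destruct (HP s ltac:(lra)) as [th [Hth Hper]].
  set (k := Int_part (y / th)).
  destruct (base_Int_part (y / th)) as [B1 B2]. fold k in B1, B2.
  rewrite <- (periodic_add_IZR f th Hper (- k) y), opp_IZR.
  assert (IZR k * th <= y /\ y - IZR k * th < th) as [Hk1 Hk2].
  { apply (Rmult_le_compat_r th) in B1; [|lra].
    assert (y / th < IZR k + 1) by lra.
    apply (Rmult_lt_compat_r th) in H; [|lra].
    unfold Rdiv in *. rewrite Rmult_assoc, Rinv_l, Rmult_1_r in B1, H by lra. lra. }
  eapply Rle_trans; [apply HL|]. rewrite Rminus_0_r, Rabs_pos_eq by lra.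
  assert (0 <= K).
  { specialize (HL 1 0). pose proof (Rabs_pos (f 1 - f 0)).
    rewrite Rminus_0_r, Rabs_R1 in HL. lra. }
  apply Rmult_le_compat_l; auto. lra.
Qed.

Lemma psi_const_of_S_fun_eq (b : nat) (g : R) (phi : R -> R) (M L : R) (i j : nat -> nat) :
  (2 <= b)%nat -> 0 < g < 1 -> Z_periodic phi -> (forall x, Rabs (phi x) <= M) ->
  0 <= L -> (forall x y, Rabs (phi x - phi y) <= L * Rabs (x - y)) ->
  is_digit_seq b i -> is_digit_seq b j -> (exists k, i k <> j k) ->
  (forall x, S_fun b g phi x j = S_fun b g phi x i) ->
  forall y, psi b g phi y = 0.
Proof.
  intros Hb Hg Hper HM HL0 HL Hi Hj Hk HS.
  assert (Hb0 : (0 < b)%nat) by lia.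
  set (f := psi b g phi).
  assert (HSf : forall z, S_fun b g f z i = S_fun b g f z j).
  { intros z. pose proof (HS z) as E.
    rewrite !(S_fun_decomp b g phi M) in E by auto. fold f in E. lra. }
  assert (Hconst : forall y, f y = f 0).
  { apply (lipschitz_small_periods_const f _ (psi_lipschitz b g phi M Hb0 Hg HM L HL0 HL)).
    intros eps Heps.
    destruct (digit_diff_small_period b i j Hb Hi Hj Hk eps Heps) as [N [u [v Huv]]].
    eexists. split; [exact Huv|]. intros y.
    rewrite <- Rplus_assoc, Z_periodic_add_IZR by exact (psi_Z_periodic b g phi Hb0 Hper).
    apply periodic_add_IZR. intros x.
    exact (S_fun_eq_periods b g _ f Hb0 Hg (psi_Z_periodic b g phi Hb0 Hper)
             (psi_Rabs_le b g phi M Hb0 Hg HM) (transfer_psi b g phi M Hb0 Hg Hper HM)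
             i j HSf N x). }
  assert (Hmean := transfer_psi b g phi M Hb0 Hg Hper HM 0).
  unfold transfer in Hmean. fold f in Hmean.
  rewrite (rsum_ext _ _ (fun _ => f 0)), rsum_const in Hmean by auto.
  assert (0 < INR b) by (apply lt_0_INR; auto).
  rewrite <- Rmult_assoc, Rinv_l, Rmult_1_l in Hmean by lra.
  intros y. rewrite Hconst. exact Hmean.
Qed.

Lemma cond_Hstar_of_S_fun_eq_on_unit (b : nat) (g : R) (phi : R -> R) (C rho : R)
  (i j : nat -> nat) :
  (2 <= b)%nat -> 0 < g < 1 -> Z_periodic phi -> 0 < rho ->
  derive_chain (Derive_n phi) -> cauchy_bounded (Derive_n phi) C rho ->
  is_digit_seq b i -> is_digit_seq b j -> (exists k, i k <> j k) ->
  (forall x, 0 <= x <= 1 -> S_fun b g phi x j - S_fun b g phi x i = 0) ->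
  cond_Hstar b g phi.
Proof.
  intros Hb Hg Hper Hr Hd Hbd Hi Hj Hk H01.
  assert (Hb0 : (0 < b)%nat) by lia.
  assert (HM : forall x, Rabs (phi x) <= C).
  { intros x. specialize (Hbd 0%nat x). simpl in Hbd. lra. }
  assert (HL : forall x y, Rabs (phi x - phi y) <= C / rho * Rabs (x - y)).
  { apply (derive_bounded_lipschitz phi (Derive_n phi 1) _ (Hd 0%nat)).
    intros t. eapply Rle_trans; [apply (Hbd 1%nat t)|]. simpl. right. field. lra. }
  assert (HC : 0 <= C) by (specialize (HM 0); pose proof (Rabs_pos (phi 0)); lra).
  assert (Hpsi : forall y, psi b g phi y = 0).
  { apply (psi_const_of_S_fun_eq b g phi C (C / rho) i j); auto.
    - apply Rdiv_le_0_compat; lra.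
    - apply (S_fun_eq_of_eq_on_unit b g phi C rho); auto. lra. }
  assert (HS : forall x w, S_fun b g phi x w = resolvent b g phi x).
  { intros x w. rewrite (S_fun_decomp b g phi C) by auto. unfold S_fun.
    rewrite (Series_ext _ (fun m => 0 * g ^ m)) by (intros m; rewrite Hpsi; ring).
    rewrite Series_scal_l. ring. }
  intros i' j' _ _ x _. rewrite !HS. ring.
Qed.

Lemma not_cond_H_of_cond_Hstar (b : nat) (g : R) (phi : R -> R) :
  (2 <= b)%nat -> cond_Hstar b g phi -> ~ cond_H b g phi.
Proof.
  intros Hb Hs HH.
  destruct (HH (fun _ => 0%nat) (fun _ => 1%nat)) as [x [Hx Hne]];
    try (intros k; simpl; lia).
  - exists 0%nat. lia.
  - apply Hne, Hs; auto; intros k; lia.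
Qed.

Theorem theorem2p2 (b : nat) (gamma : R) (phi : R -> R)
  (hb : (2 <= b)%nat) (hgamma : 0 < gamma < 1)
  (hphi_an : real_analytic phi) (hphi_per : Z_periodic phi) :
  (cond_Hstar b gamma phi /\ ~ cond_H b gamma phi) \/
  (~ cond_Hstar b gamma phi /\ cond_H b gamma phi).
Proof.
  destruct (classic (cond_Hstar b gamma phi)) as [Hs|Hs].
  - left. split; auto. apply not_cond_H_of_cond_Hstar; auto.
  - right. split; auto.
    destruct (real_analytic_periodic_cauchy phi hphi_an hphi_per)
      as [C [rho [Hrho [Hd Hbd]]]].
    intros i j Hi Hj Hk. apply NNPP. intros Hn. apply Hs.
    apply (cond_Hstar_of_S_fun_eq_on_unit b gamma phi C rho i j); auto.
    intros x Hx. apply NNPP. intros Hne. apply Hn. eauto.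
Qed.
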